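(* Let $G$ be a finite group whose Sylow $2$-subgroups are isomorphic to $D_{2n}$ for some integer $n\ge 2$, and let $H$ be a $2$-subgroup of $G$. Then $H$ is not a perfect code of $G$ if and only if there exists a cyclic $2$-subgroup $C$ of $G$ such that $1<H<C$.
   Context: $D_{2n}$ denotes the dihedral group of order $2n$, with $D_4=C_2\times C_2$. For a group $G$ with identity $e$ and an inverse-closed subset $S\subseteq G\setminus\{e\}$, the Cayley graph $\mathrm{Cay}(G,S)$ has vertex set $G$ and edges $\{g,sg\}$ for $s\in S$, $g\in G$. A perfect code in a graph is an independent set $C$ of vertices such that every vertex outside $C$ is adjacent to exactly one vertex of $C$. A subgroup $H$ of $G$ is a perfect code of $G$ if some Cayley graph of $G$ admits $H$ as a perfect code. *)

From HB Require Import structures.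
From mathcomp Require Import all_boot all_order all_fingroup all_solvable.
Set Implicit Arguments.
Unset Strict Implicit.
Unset Printing Implicit Defensive.
Local Open Scope group_scope.

Definition cayley_set (gT : finGroupType) (G S : {set gT}) : bool :=
  [&& S \subset G, 1 \notin S & [forall s in S, s^-1 \in S]].

(* Adjacency in Cay(G,S): edges are {g, s g} for s in S, g in G. *)
Definition cay_adj (gT : finGroupType) (S : {set gT}) (x y : gT) : bool :=
  (y * x^-1 \in S) || (x * y^-1 \in S).

Definition perfect_code_in (gT : finGroupType) (G S C : {set gT}) : Prop :=
  [/\ C \subset G,
      (forall c1 c2, c1 \in C -> c2 \in C -> ~~ cay_adj S c1 c2) &
      (forall g, g \in G -> g \notin C -> #|[set c in C | cay_adj S g c]| = 1%N)].

Definition is_perfect_code (gT : finGroupType) (G H : {set gT}) : Prop :=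
  exists S : {set gT}, cayley_set G S /\ perfect_code_in G S H.

(* H is a perfect code of G as soon as G \ H has an inverse-closed left
   transversal T of H: take the connection set S := T.  Such a T is built
   greedily, a left coset aH at a time: pick t in aH; if t^-1 falls in another
   left coset bH, both cosets are settled by {t, t^-1}.  Counting left cosets
   inside the double cosets HcH and Hc^-1H shows that this only gets stuck in a
   self-inverse double coset with an odd number of left cosets, where a coset
   containing some t with t^2 = 1 is needed.  For a 2-group H the number of
   left cosets in HdH is the 2-power |H : H^d|, so it is odd only when d
   normalises H, and then d^2 is in H.  In the dihedral Sylow 2-subgroup
   containing H<d>, either dH contains a reflection, which squares to 1, or
   H<d> lies in the cyclic rotation subgroup, giving 1 < H < C.
   Conversely, if 1 < H < C with C a cyclic 2-group, take g in C \ H with g^2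
   in H and its neighbour c in H: s = g c^-1 lies in S and is adjacent to both
   1 and s^2 in H, so s^2 = 1; but the unique involution of C lies in H. *)

From HB Require Import structures.
From mathcomp Require Import all_boot all_order all_fingroup all_solvable.
Set Implicit Arguments.
Unset Strict Implicit.
Unset Printing Implicit Defensive.
Local Open Scope group_scope.

Section SymmetricTransversals.
Variables (gT : finGroupType) (H : {group gT}).
Implicit Types (a c y : gT).

Lemma dcosetP c y :
  reflect (exists2 h1, h1 \in H & exists2 h2, h2 \in H & y = h1 * c * h2)
          (y \in H :* c * H).
Proof.
apply: (iffP mulsgP) => [[u h2 /rcosetP[h1 Hh1 ->] Hh2 ->] | [h1 Hh1 [h2 Hh2 ->]]].
  by exists h1 => //; exists h2.
by exists (h1 * c) h2 => //; apply/rcosetP; exists h1.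
Qed.

Lemma dcoset_refl c : c \in H :* c * H.
Proof. by apply/dcosetP; exists 1 => //; exists 1; rewrite ?mulg1 ?mul1g. Qed.

Lemma dcoset_eqP a c : reflect (H :* a * H = H :* c * H) (a \in H :* c * H).
Proof.
apply: (iffP idP) => [/dcosetP[h1 Hh1 [h2 Hh2 ->]] | <-]; last exact: dcoset_refl.
by rewrite -!mulg_set1 !mulgA (rcoset_id Hh1) -(mulgA _ [set h2]) (lcoset_id Hh2).
Qed.

Lemma invg_dcoset c : (H :* c * H)^-1 = H :* c^-1 * H.
Proof. by rewrite !invMg invGid invg_set1 mulgA. Qed.

Lemma memV_dcoset c y : (y^-1 \in H :* c * H) = (y \in H :* c^-1 * H).
Proof. by rewrite -invg_dcoset mem_invg. Qed.

Lemma lcoset_sub_dcoset a c : a \in H :* c * H -> a *: H \subset H :* c * H.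
Proof. by move/dcoset_eqP <-; rewrite mulSg ?mulG_subr. Qed.

Lemma card_dcoset c : #|H :* c * H| = (#|H : H :^ c| * #|H|)%N.
Proof.
have -> : H :* c * H = c *: (H :^ c * H).
  by rewrite conjsgE !mulgA mulg_set1 mulgV mul1g.
rewrite card_lcoset; apply/eqP.
rewrite -(@eqn_pmul2r #|H :^ c :&: H|) ?cardG_gt0 // -mul_cardG cardJg.
by rewrite setIC -{1}(LagrangeI H (H :^ c)) -mulnA mulnC.
Qed.

Implicit Types (X T : {set gT}) (t x : gT).

Definition rmul_closed X := {in X & H, forall x h, x * h \in X}.

Definition sym_ltransversal T X :=
  [/\ T \subset X, {in T, forall t, t^-1 \in T},
      {in T &, forall t1 t2, t2 \in t1 *: H -> t1 = t2}
    & {in X, forall x, exists2 t, t \in T & t \in x *: H}].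

Lemma sym_ltransversal0 : sym_ltransversal set0 set0.
Proof. by split=> [|t|t1 t2|x]; rewrite ?sub0set ?inE. Qed.

Lemma sym_ltransversal_pair t : (t^-1 \in t *: H -> t^-1 = t) ->
  sym_ltransversal [set t; t^-1] (t *: H :|: t^-1 *: H).
Proof.
move=> tVt; split.
- by rewrite subUset !sub1set !inE !lcoset_refl orbT.
- by move=> y /set2P[] ->; rewrite !inE ?invgK eqxx ?orbT.
- move=> t1 t2 /set2P[] -> /set2P[] -> // => [/tVt | ] //.
  by rewrite lcoset_sym => /tVt.
- move=> x /setUP[] xH; [exists t | exists t^-1];
    by rewrite ?inE ?eqxx ?orbT // lcoset_sym.
Qed.

Lemma sym_ltransversalU T1 T2 X1 X2 : rmul_closed X1 -> [disjoint X1 & X2] ->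
  sym_ltransversal T1 X1 -> sym_ltransversal T2 X2 ->
  sym_ltransversal (T1 :|: T2) (X1 :|: X2).
Proof.
move=> rX1 dX [sT1 vT1 uT1 cT1] [sT2 vT2 uT2 cT2].
have cross t1 t2 : t1 \in T1 -> t2 \in T2 -> t2 \notin t1 *: H.
  move=> /(subsetP sT1) t1X /(subsetP sT2) t2X; apply/lcosetP => -[h Hh def_t2].
  by rewrite def_t2 (disjointFr dX (rX1 _ _ t1X Hh)) in t2X.
split.
- exact: setUSS.
- by move=> t /setUP[] /[dup] ? => [/vT1|/vT2] tV; rewrite inE tV ?orbT.
- move=> t1 t2 /setUP[] t1T /setUP[] t2T; first exact: uT1.
  + by move/(negP (cross _ _ t1T t2T)).
  + by rewrite lcoset_sym => /(negP (cross _ _ t2T t1T)).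
  + exact: uT2.
- move=> x /setUP[] /[dup] ? => [/cT1|/cT2] [t tT tx]; exists t => //;
    by rewrite inE tT ?orbT.
Qed.

Lemma rmul_closedD X a : rmul_closed X -> rmul_closed (X :\: a *: H).
Proof.
move=> rX x h /setDP[xX xa] Hh; rewrite inE rX // andbT.
by rewrite mem_lcoset mulgA groupMr // -mem_lcoset.
Qed.

Lemma rmul_closed_lcoset X a : rmul_closed X -> a \in X -> a *: H \subset X.
Proof. by move=> rX aX; apply/subsetP => _ /lcosetP[h Hh ->]; apply: rX. Qed.

Lemma card_dcosetD X a c : rmul_closed X -> a \in X ->
  #|X :&: H :* c * H| =
    #|(X :\: a *: H) :&: H :* c * H| + (if a \in H :* c * H then #|H| else 0).
Proof.
move=> rX aX; rewrite -(cardsID (a *: H) (X :&: _)) addnC setIDAC; congr (_ + _)%N.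
have [aD | aD] := boolP (a \in H :* c * H).
  by rewrite (setIidPr _) ?card_lcoset // subsetI rmul_closed_lcoset ?lcoset_sub_dcoset.
apply/eqP; rewrite cards_eq0; apply/eqP/setP => y; rewrite !inE.
apply/negP => /andP[/andP[_ /dcoset_eqP yD] ya]; case/negP: aD; rewrite -yD.
by apply: (subsetP (lcoset_sub_dcoset (dcoset_refl y))); rewrite lcoset_sym.
Qed.

Definition sqrt1_in_coset x := exists2 t, t \in x *: H & t * t = 1.

Definition dcoset_balanced X :=
  forall c, #|X :&: H :* c * H| = #|X :&: H :* c^-1 * H|.

(* [#|H|.*2 %| #|X :&: H :* c * H|]: X keeps an even number of the left
   cosets of H inside HcH. *)
Definition dcoset_parity X := forall c, c^-1 \in H :* c * H ->
  #|H|.*2 %| #|X :&: H :* c * H|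
  \/ {in X :&: H :* c * H, forall x, sqrt1_in_coset x}.

Definition admissible X :=
  [/\ rmul_closed X, dcoset_balanced X & dcoset_parity X].

Lemma admissibleD_pair X t : admissible X -> t \in X -> t^-1 \in X ->
  t^-1 \notin t *: H -> admissible (X :\: (t *: H :|: t^-1 *: H)).
Proof.
move=> [rX balX parX] tX tVX tVt; set Y := X :\: _.
have tVXt : t^-1 \in X :\: t *: H by rewrite inE tVt.
have cardY c : #|X :&: H :* c * H| = #|Y :&: H :* c * H|
    + ((if t \in H :* c^-1 * H then #|H| else 0)
       + (if t \in H :* c * H then #|H| else 0)).
  rewrite (card_dcosetD c rX tX) (card_dcosetD c (rmul_closedD rX) tVXt).
  by rewrite setDDl memV_dcoset addnA.
split.
- by rewrite /Y -setDDl; do 2!apply: rmul_closedD.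
- move=> c; have := balX c; rewrite !cardY invgK.
  by rewrite (addnC (if t \in H :* c * H then _ else _)) => /addIn.
- move=> c cV; have Dc : H :* c^-1 * H = H :* c * H by apply/dcoset_eqP.
  case: (parX c cV) => [dv | sq]; [left | right].
    by move: dv; rewrite cardY Dc addnn; case: ifP => _; rewrite ?addn0 ?dvdn_addl.
  by move=> x /setIP[/setDP[xX _] xD]; apply: sq; rewrite inE xX.
Qed.

Lemma admissibleD_single X a : admissible X -> a \in X ->
    X :&: H :* a^-1 * H \subset a *: H ->
  sqrt1_in_coset a /\ admissible (X :\: a *: H).
Proof.
move=> [rX balX parX] aX sXa.
have cardXa : #|X :&: H :* a * H| = #|H|.
  have sHXa : a *: H \subset X :&: H :* a * H.
    by rewrite subsetI rmul_closed_lcoset ?lcoset_sub_dcoset ?dcoset_refl.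
  by apply/eqP; rewrite eqn_leq {1}balX -(card_lcoset H a) !subset_leq_card.
have Da : H :* a^-1 * H = H :* a * H.
  have [b bXD] : exists b, b \in X :&: H :* a^-1 * H.
    by apply/set0Pn; rewrite -card_gt0 -balX cardXa cardG_gt0.
  have bDa : b \in H :* a * H.
    exact: subsetP (lcoset_sub_dcoset (dcoset_refl a)) b (subsetP sXa b bXD).
  move/dcoset_eqP: bDa => <-.
  by case/setIP: bXD => _ /dcoset_eqP.
have aDc c : (a \in H :* c^-1 * H) = (a \in H :* c * H).
  by rewrite -memV_dcoset; apply/dcoset_eqP/dcoset_eqP; rewrite Da.
have cardD c := card_dcosetD c rX aX.
split; last split.
- have aV : a^-1 \in H :* a * H by rewrite -Da dcoset_refl.
  case: (parX a aV) => [|sq]; last by apply: sq; rewrite inE aX dcoset_refl.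
  rewrite cardXa => /(dvdn_leq (cardG_gt0 H)).
  by rewrite -addnn leqNgt -{1}[#|H|]addn0 ltn_add2l cardG_gt0.
- exact: rmul_closedD.
- by move=> c; have := balX c; rewrite !cardD aDc => /addIn.
- move=> c cV; have [aD | aD] := boolP (a \in H :* c * H).
    left; have := cardD c; rewrite aD -(dcoset_eqP _ _ aD) cardXa.
    by rewrite -{1}[#|H|]add0n => /addIn <-.
  case: (parX c cV) => [dv | sq]; [left | right].
    by rewrite cardD (negPf aD) addn0 in dv.
  by move=> x /setIP[/setDP[xX _] xD]; apply: sq; rewrite inE xX.
Qed.

Lemma admissible_step X a : admissible X -> a \in X ->
  exists2 t, [/\ t \in X, t^-1 \in X & t^-1 \in t *: H -> t^-1 = t]
           & admissible (X :\: (t *: H :|: t^-1 *: H)).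
Proof.
move=> admX aX; have [rX _ _] := admX.
(* Either aH can be paired with another left coset of X inside Ha^-1H, or aH
   is the only one and its double coset is self-inverse with odd parity. *)
pose partner b := (b \in X :&: H :* a^-1 * H) && (b \notin a *: H).
have [b /andP[/setIP[bX /dcosetP[h1 Hh1 [h2 Hh2 def_b]]] baH] | no_partner] :=
  pickP partner.
  pose t := a * h1^-1.
  have ta : t \in a *: H by rewrite mem_lcoset mulKg groupV.
  have bt : b = t^-1 * h2 by rewrite def_b invMg invgK.
  have tVt : t^-1 \notin t *: H.
    apply: contra baH => tVt; rewrite -(lcoset_eqP ta) bt.
    by rewrite -(lcoset_eqP tVt) mem_lcoset mulKg.
  have tX : t \in X := subsetP (rmul_closed_lcoset rX aX) t ta.
  have tVX : t^-1 \in X by rewrite -[t^-1]mulg1 -(mulgV h2) mulgA -bt rX ?groupV.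
  exists t; last exact: admissibleD_pair.
  by split=> // /(negP tVt).
have sXa : X :&: H :* a^-1 * H \subset a *: H.
  by apply/subsetP => b bXD; move/negbT: (no_partner b); rewrite /partner bXD negbK.
have [[t ta tt] admY] := admissibleD_single admX aX sXa.
have tV : t^-1 = t by apply/eqP; rewrite eq_invg_mul tt.
exists t; last by rewrite tV setUid (lcoset_eqP ta).
by rewrite tV (subsetP (rmul_closed_lcoset rX aX)).
Qed.

Lemma admissible_sym_ltransversal X : admissible X -> exists T, sym_ltransversal T X.
Proof.
elim: {X}_.+1 {-2}X (ltnSn #|X|) => // k IHk X leXk admX.
have [-> | [a aX]] := set_0Vmem X; first by exists set0; apply: sym_ltransversal0.
have [t [tX tVX tVt] admY] := admissible_step admX aX.
have [rX _ _] := admX; have [rY _ _] := admY.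
set P := t *: H :|: t^-1 *: H in admY rY *.
have sPX : P \subset X by rewrite subUset !rmul_closed_lcoset.
have [T symT] : exists T, sym_ltransversal T (X :\: P).
  apply: IHk admY; rewrite -ltnS (leq_trans _ leXk) // ltnS.
  rewrite proper_card //; apply/properP; split; first exact: subsetDl.
  by exists t; rewrite // !inE lcoset_refl.
exists (T :|: [set t; t^-1]).
rewrite -(setID X P) (setIidPr sPX) [P :|: _]setUC.
apply: sym_ltransversalU => //; last exact: sym_ltransversal_pair.
by rewrite disjoints_subset subsetDr.
Qed.

End SymmetricTransversals.

Arguments dcosetP {gT H c y}.
Arguments dcoset_eqP {gT H a c}.

Section PerfectCodes.
Variable gT : finGroupType.
Implicit Types (G H : {group gT}) (T : {set gT}).

Lemma perfect_code_sym_ltransversal G H T :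
  H \subset G -> sym_ltransversal H T (G :\: H) -> is_perfect_code G H.
Proof.
move=> sHG [sTGH vT uT cT]; have sTG := subset_trans sTGH (subsetDl G H).
have notTH x : x \in H -> x \notin T.
  by move=> xH; apply: contraL xH => /(subsetP sTGH) /setDP[].
exists T; split; first by apply/and3P; split; [|apply: notTH|apply/forall_inP].
split=> // [c1 c2 c1H c2H | g gG gH].
  by rewrite /cay_adj negb_or !notTH ?groupM ?groupV.
have [t0 t0T t0g] : exists2 t0, t0 \in T & t0 \in g *: H by apply: cT; apply/setDP.
apply/eqP/cards1P; exists (t0^-1 * g); apply/setP => c; rewrite !inE.
apply/andP/eqP => [[cH adj] | ->].
  have gcT : g * c^-1 \in T.
    by case/orP: adj => // /vT; rewrite invMg invgK.
  have gc_t0 : g * c^-1 \in t0 *: H.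
    by rewrite (lcoset_eqP t0g) mem_lcoset mulKg groupV.
  by rewrite (uT _ _ t0T gcT gc_t0) invMg invgK mulgKV.
split; first by rewrite -groupV invMg invgK -mem_lcoset.
by rewrite /cay_adj invMg invgK mulKVg t0T orbT.
Qed.

Lemma admissible_complement G H : H \subset G ->
    (forall d, d \in G :\: H -> d^-1 \in H :* d * H -> odd #|H : H :^ d| ->
       sqrt1_in_coset H d) ->
  admissible H (G :\: H).
Proof.
move=> sHG sqrt1; split.
- by move=> x h /setDP[xG xH] hH; rewrite inE groupMr // xH groupM // (subsetP sHG).
- by move=> c; rewrite -card_invg invIg invDg !invGid invg_dcoset.
move=> c cV.
have [-> | [d /setIP[/setDP[dG dH] /dcoset_eqP Dd]]] :=
  set_0Vmem ((G :\: H) :&: H :* c * H).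
  by left; rewrite cards0 dvdn0.
have sDGH : H :* d * H \subset G :\: H.
  apply/subsetP => _ /dcosetP[h1 Hh1 [h2 Hh2 ->]].
  by rewrite inE groupMr // groupMl // dH !groupM // (subsetP sHG).
rewrite -Dd (setIidPr sDGH).
have [odd_idx | even_idx] := boolP (odd #|H : H :^ d|); [right | left].
  move=> x xD; have Dx := dcoset_eqP xD; apply: sqrt1.
  - exact: subsetP sDGH x xD.
  - by rewrite Dx Dd -(dcoset_eqP cV) memV_dcoset invgK -Dd.
  have : #|H :* x * H| = #|H :* d * H| by rewrite Dx.
  by rewrite !card_dcoset => /eqP; rewrite (eqn_pmul2r (cardG_gt0 H)) => /eqP ->.
by rewrite card_dcoset -mul2n dvdn_mul ?dvdn2.
Qed.

Theorem perfect_code_of_sqrt1_cosets G H : H \subset G ->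
    (forall d, d \in G :\: H -> d^-1 \in H :* d * H -> odd #|H : H :^ d| ->
       sqrt1_in_coset H d) ->
  is_perfect_code G H.
Proof.
move=> sHG sqrt1.
have [T symT] := admissible_sym_ltransversal (admissible_complement sHG sqrt1).
exact: perfect_code_sym_ltransversal symT.
Qed.

End PerfectCodes.

Section CyclicOvergroups.
Variable gT : finGroupType.
Implicit Types (G H C : {group gT}) (S : {set gT}) (g s y : gT).

Lemma perfect_code_neighbor G H S g : cayley_set G S -> perfect_code_in G S H ->
  g \in G -> g \notin H -> exists2 c, c \in H & g * c^-1 \in S.
Proof.
case/and3P=> _ _ /forall_inP vS [_ _ cnt] gG gH.
have /eqP/cards1P[c defN] := cnt g gG gH.
have /setIdP[cH adj] : c \in [set c in H | cay_adj S g c] by rewrite defN set11.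
by exists c => //; case/orP: adj => // /vS; rewrite invMg invgK.
Qed.

Lemma perfect_code_sqr_eq1 G H S s : cayley_set G S -> perfect_code_in G S H ->
  s \in S -> s * s \in H -> s * s = 1.
Proof.
case/and3P=> sSG _ _ [_ indep cnt] sS ssH.
have sH : s \notin H.
  apply: contraL sS => sH; have := indep 1 s (group1 H) sH.
  by rewrite /cay_adj invg1 mulg1 negb_or => /andP[].
have /eqP/cards1P[c defN] := cnt s (subsetP sSG s sS) sH.
have : 1 \in [set c in H | cay_adj S s c].
  by rewrite !inE group1 /cay_adj invg1 mulg1 sS orbT.
have : s * s \in [set c in H | cay_adj S s c] by rewrite !inE ssH /cay_adj mulgK sS.
by rewrite defN => /set1P -> /set1P ->.
Qed.

Lemma two_elt_cycle_sqr_mem H y : 2.-elt y -> y \notin H ->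
  exists2 g, g \in <[y]> :\: H & g * g \in H.
Proof.
move=> y2 yH; have [e oy] := p_natP y2.
have ex_m : exists m, y ^+ (2 ^ m) \in H by exists e; rewrite -oy expg_order group1.
case: (ex_minnP ex_m) => [[|m]]; first by rewrite expg1 (negPf yH).
move=> ym minm; exists (y ^+ (2 ^ m)); last by rewrite -expgD addnn -mul2n -expnS.
by rewrite inE mem_cycle andbT; apply/negP => /minm; rewrite ltnn.
Qed.

Lemma cyclic_sqr1_mem C H s : cyclic C -> H \subset C -> 2 %| #|H| ->
  s \in C -> s * s = 1 -> s \in H.
Proof.
move=> cC sHC evenH sC ss1; have [-> | s1] := eqVneq s 1; first exact: group1.
have os : #[s] = 2 by apply: nt_prime_order; rewrite ?expg2.
have [h hH oh] := Cauchy (isT : prime 2) evenH.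
rewrite -cycle_subG; suff /eqP <- : <[h]> :==: <[s]> by rewrite cycle_subG.
by rewrite (eq_subG_cyclic cC) ?cycle_subG ?sC ?(subsetP sHC _ hH) //= -!orderE oh os.
Qed.

Lemma not_perfect_code_cyclic G H C : C \subset G -> 2.-group C -> cyclic C ->
  [1 gT] \proper H -> H \proper C -> ~ is_perfect_code G H.
Proof.
move=> sCG pC cycC; rewrite proper1G => ntH /properP[sHC [y yC yH]] [S [cayS pcS]].
have [g /setDP[gy gH] ggH] := two_elt_cycle_sqr_mem (mem_p_elt pC yC) yH.
have gC : g \in C by move: gy; apply/subsetP; rewrite cycle_subG.
have [c cH gcS] := perfect_code_neighbor cayS pcS (subsetP sCG g gC) gH.
have cC : c \in C := subsetP sHC c cH.
have ssH : g * c^-1 * (g * c^-1) \in H.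
  have gc : commute g c^-1 by apply: (centsP (cyclic_abelian cycC)); rewrite ?groupV.
  by rewrite -mulgA (mulgA c^-1) -gc !mulgA 2?groupMr ?groupV.
have [_ evenH _] : [/\ prime 2, 2 %| #|H| & _] := pgroup_pdiv (pgroupS sHC pC) ntH.
have := cyclic_sqr1_mem cycC sHC evenH _ (perfect_code_sqr_eq1 cayS pcS gcS ssH).
by move/(_ (groupM gC (groupVr cC))); rewrite groupMr ?groupV //; apply/negP.
Qed.

End CyclicOvergroups.

Section DihedralSylow.
Variable gT : finGroupType.
Implicit Types (G H P : {group gT}) (d : gT).

Lemma pgroup_p'index_norm p H d :
  p.-group H -> p^'.-nat #|H : H :^ d| -> d \in 'N(H).
Proof.
move=> pH p'idx; have idx1 := pnat_1 (pnat_dvd (dvdn_indexg _ _) pH) p'idx.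
apply/normP/eqP; rewrite eq_sym eqEcard cardJg leqnn andbT.
by rewrite -indexg_eq1 idx1.
Qed.

Lemma sqr_mem_norm_dcosetV H d : d \in 'N(H) -> d^-1 \in H :* d * H -> d * d \in H.
Proof.
move=> dN; rewrite norm_rlcoset // -mulgA mulGid mem_lcoset => dVdV.
by rewrite -groupV invMg.
Qed.

Lemma dihedral2_cyclic_involutions P n : 1 < n -> 2.-group P -> P \isog 'D_(n.*2) ->
  exists2 X : {group gT}, X \subset P & cyclic X /\ {in P :\: X, forall t, t * t = 1}.
Proof.
move=> n_gt1 pP isoP; have [k oP] := p_natP pP.
have oD : n.*2 = (2 ^ k)%N by rewrite -oP (card_isog isoP) card_dihedral.
have k_gt1 : 1 < k.
  by rewrite -(ltn_exp2l _ _ (ltnSn 1)) -oD -[(2 ^ 1)%N]/(1.*2) ltn_double.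
rewrite oD in isoP.
have [[x y] genP _] := generators_2dihedral k_gt1 isoP.
have [[_ invP _] _ _ _ _] := dihedral2_structure k_gt1 genP isoP.
exists <[x]>%G; first by case: genP => _ xP _ _; rewrite cycle_subG.
split=> [|t /invP ot]; first exact: cycle_cyclic.
by rewrite -expg2 -ot expg_order.
Qed.

Lemma sqrt1_coset_or_cyclic_overgroup G H n d : 1 < n ->
    (forall P, P \in 'Syl_2(G) -> P \isog 'D_(n.*2)) ->
    H \subset G -> 2.-group H -> d \in G :\: H -> d \in 'N(H) -> d * d \in H ->
  sqrt1_in_coset H d \/
  exists C : {group gT},
    [/\ C \subset G, 2.-group C, cyclic C, [1 gT] \proper H & H \proper C].
Proof.
move=> n_gt1 sylD sHG pH /setDP[dG dH] dN ddH.
have [H1 | ntH] := eqVneq (H :> {set gT}) 1.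
  by left; exists d; rewrite ?lcoset_refl //; apply/set1gP; rewrite -H1.
pose L := (H <*> <[d]>)%G.
have pL : 2.-group L.
  have pd : 2.-group <[d]>.
    rewrite /pgroup -orderE (@pnat_dvd _ (2 * #|H|)) ?pnatM ?pnat_id //.
    by rewrite order_dvdn expgM expg2 expg_cardG.
  by rewrite /= norm_joinEr ?cycle_subG // pgroupM pH.
have sLG : L \subset G by rewrite join_subG sHG cycle_subG.
have [P sylP sLP] := Sylow_superset sLG pL.
have PSyl : P \in 'Syl_2(G) by rewrite inE.
have [X _ [cycX invX]] :=
  dihedral2_cyclic_involutions n_gt1 (pHall_pgroup sylP) (sylD P PSyl).
have sHP : H \subset P := subset_trans (joing_subl _ _) sLP.
have dP : d \in P := subsetP sLP d (subsetP (joing_subr _ _) d (cycle_id d)).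
have [sdHX | /subsetPn[t tdH tX]] := boolP (d *: H \subset X).
  have dX : d \in X := subsetP sdHX d (lcoset_refl H d).
  right; exists L; split=> //; last first.
  - apply/properP; split; first exact: joing_subl.
    by exists d; rewrite ?mem_gen ?inE ?cycle_id ?orbT.
  - by rewrite proper1G.
  apply: cyclicS cycX; rewrite join_subG cycle_subG dX andbT.
  apply/subsetP => h hH; rewrite -(mulKg d h) groupM ?groupV //.
  by rewrite (subsetP sdHX) // mem_lcoset mulKg.
left; exists t => //; apply: invX; rewrite inE tX.
by case/lcosetP: tdH => h hH ->; rewrite groupM // (subsetP sHP).
Qed.

End DihedralSylow.

Theorem corollary3p7 (gT : finGroupType) (G H : {group gT}) (n : nat) :
  (2 <= n)%N ->
  (forall P : {group gT}, P \in 'Syl_2(G) -> P \isog 'D_(n.*2)) ->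
  H \subset G -> 2.-group H ->
  (~ is_perfect_code G H <->
   exists C : {group gT},
     [/\ C \subset G, 2.-group C, cyclic C, [1 gT] \proper H & H \proper C]).
Proof.
move=> n_ge2 sylD sHG pH; split=> [npc | [C [sCG pC cycC ntH ltHC]]]; last first.
  exact: not_perfect_code_cyclic sCG pC cycC ntH ltHC.
pose overgroup (C : {group gT}) :=
  [&& C \subset G, 2.-group C, cyclic C, [1 gT] \proper H & H \proper C].
have [/existsP[C /and5P[]] | noC] := boolP [exists C : {group gT}, overgroup C].
  by move=> *; exists C.
exfalso; apply: npc; apply: (perfect_code_of_sqrt1_cosets sHG) => d dGH dV odd_idx.
have dN : d \in 'N(H) by apply: pgroup_p'index_norm pH _; rewrite -odd_2'nat.
have ddH := sqr_mem_norm_dcosetV dN dV.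
case: (sqrt1_coset_or_cyclic_overgroup n_ge2 sylD sHG pH dGH dN ddH) => // -[C ovC].
by case/existsP: noC; exists C; apply/and5P.
Qed.
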